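(* Let $n,r\ge1$ and $\mathbf U^0=\mathbb Q(v)[K_1^{\pm1},\dots,K_n^{\pm1}]$. The ideal of $\mathbf U^0$ generated by $$I_r=\{1-\textstyle\sum_{\lambda\in\Lambda(n,r)}\mathfrak L_\lambda\}\cup\{\mathfrak L_\lambda\mathfrak L_\mu-\delta_{\lambda,\mu}\mathfrak L_\lambda\mid\lambda,\mu\in\Lambda(n,r)\}\cup\{K_i\mathfrak L_\lambda-v^{\lambda_i}\mathfrak L_\lambda\mid 1\le i\le n,\ \lambda\in\Lambda(n,r)\}$$ coincides with the ideal generated by $$J_r=\{K_1K_2\cdots K_n-v^r\}\cup\{[K_i;r+1]^!\mid 1\le i\le n\}.$$
   Context: $\Lambda(n,r)$ is the set of compositions $\lambda=(\lambda_1,\dots,\lambda_n)\in\mathbb N^n$ with $\sum\lambda_i=r$. For an invertible element $X$ and integers $a$, $t\ge1$: $\left[{X;a\atop t}\right]=\prod_{s=1}^t\frac{Xv^{a-s+1}-X^{-1}v^{-a+s-1}}{v^s-v^{-s}}$ and $\left[{X;a\atop 0}\right]=1$. For $\mu\in\mathbb N^n$, $\mathfrak L_\mu=\prod_{i=1}^n\left[{K_i;0\atop\mu_i}\right]$, and $[K_i;r+1]^!=(K_i-1)(K_i-v)\cdots(K_i-v^r)$. *)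

From HB Require Import structures.
From mathcomp Require Import all_boot all_order all_algebra.
From mathcomp Require Import fraction.
From mathcomp Require Import mpoly.

Set Implicit Arguments.
Unset Strict Implicit.
Unset Printing Implicit Defensive.

Import GRing.Theory.
Local Open Scope ring_scope.
Local Notation "x %:F" := (@FracField.tofrac _ x).

Definition Qv : fieldType := {fraction {poly rat}}.
Definition vQ : Qv := ('X)%:F.

(* The ambient field Q(v)(K_1,...,K_n) = Frac(Q(v)[K_1,...,K_n]).
   U^0 = Q(v)[K_1^{±1},...,K_n^{±1}] is realised as its subring of
   elements p / (K_1...K_n)^m with p a polynomial. *)
Definition FF (n : nat) : fieldType := {fraction {mpoly Qv[n]}}.

Definition vv (n : nat) : FF n := (vQ%:MP)%:F.
Definition KK (n : nat) (i : 'I_n) : FF n := ('X_i)%:F.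

Definition inU0 (n : nat) (f : FF n) : Prop :=
  exists (p : {mpoly Qv[n]}) (m : nat),
    f = p%:F / (\prod_(i < n) KK i) ^+ m.

Definition ideal_gen (n : nat) (S : FF n -> Prop) (x : FF n) : Prop :=
  exists (k : nat) (a g : 'I_k -> FF n),
    (forall j, inU0 (a j) /\ S (g j)) /\ x = \sum_(j < k) a j * g j.

Definition qbin (n : nat) (X : FF n) (a : int) (t : nat) : FF n :=
  \prod_(1 <= s < t.+1)
     ((X * vv n ^ (a - s%:Z + 1) - X^-1 * vv n ^ (- a + s%:Z - 1))
        / (vv n ^ (s%:Z) - vv n ^ (- s%:Z))).

(* compositions of r into n parts: lambda : 'I_n -> 'I_r.+1 with sum r
   (every part of a composition of r is <= r, so this is Lambda(n,r)) *)
Definition comp (n r : nat) := {ffun 'I_n -> 'I_r.+1}.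
Definition is_comp (n r : nat) (lam : comp n r) : bool :=
  \sum_(i < n) (lam i : nat) == r.

Definition frakL (n r : nat) (mu : comp n r) : FF n :=
  \prod_(i < n) qbin (KK i) 0 (mu i).

(* [K_i; r+1]^! = (K_i - 1)(K_i - v)...(K_i - v^r) *)
Definition Kfact (n : nat) (i : 'I_n) (r : nat) : FF n :=
  \prod_(s < r.+1) (KK i - vv n ^+ s).

Definition Iset (n r : nat) (x : FF n) : Prop :=
  x = 1 - \sum_(lam : comp n r | is_comp lam) frakL lam
  \/ (exists lam mu : comp n r, [/\ is_comp lam, is_comp mu &
        x = frakL lam * frakL mu - (lam == mu)%:R * frakL lam])
  \/ (exists (i : 'I_n) (lam : comp n r), is_comp lam /\
        x = KK i * frakL lam - vv n ^+ (lam i : nat) * frakL lam).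

Definition Jset (n r : nat) (x : FF n) : Prop :=
  x = \prod_(i < n) KK i - vv n ^+ r
  \/ (exists i : 'I_n, x = Kfact i r).

From Pilot Require Import Defs.
From HB Require Import structures.
From mathcomp Require Import all_boot all_order all_algebra.
From mathcomp Require Import fraction mpoly qpoly.
From mathcomp Require Import ring zify.

(* Modulo [J_r] each [K_i] is killed by the separable polynomial
   [[K_i; r+1]^! = prod_(s <= r) (K_i - v^s)], so the products [E_mu] of the
   Lagrange idempotents [e_(mu_i)(K_i)] for the nodes [1, v, ..., v^r] sum to 1
   and satisfy [K_i E_mu = v^(mu_i) E_mu].  Since [K_1...K_n = v^r], [E_mu]
   vanishes unless [mu] is a composition of [r]; since [[v^m; 0 over t]] is 0 for
   [m < t] and 1 for [m = t], [L_lam E_mu = delta_(lam,mu) E_mu] for compositions.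
   Hence [L_lam = E_lam] modulo [J_r], and [I_r] follows.  Conversely, modulo
   [I_r] every [X] equals [sum_lam X L_lam] and [K_i L_lam = v^(lam_i) L_lam], so
   [X] lies in [(I_r)] as soon as it vanishes at every [v^lam]; the elements of
   [J_r] do. *)

Set Implicit Arguments.
Unset Strict Implicit.
Unset Printing Implicit Defensive.
Import GRing.Theory.
Local Open Scope ring_scope.
Local Notation "x %:F" := (@FracField.tofrac _ x).

Section LaurentRing.
Variable n : nat.
Local Notation F := (FF n).
Local Notation U0 := (@inU0 n).

Definition scalar (x : F) : Prop := exists c : Qv, x = (c%:MP)%:F.

Lemma scalar1 : scalar 1. Proof. by exists 1; rewrite !rmorph1. Qed.

Lemma scalarB x y : scalar x -> scalar y -> scalar (x - y).
Proof. by move=> [c ->] [d ->]; exists (c - d); rewrite !rmorphB. Qed.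

Lemma scalarM x y : scalar x -> scalar y -> scalar (x * y).
Proof. by move=> [c ->] [d ->]; exists (c * d); rewrite !rmorphM. Qed.

Lemma scalarV x : scalar x -> scalar x^-1.
Proof.
move=> [c ->]; exists c^-1.
by rewrite -[RHS]/((@FracField.tofrac _ \o @mpolyC n Qv) c^-1) fmorphV.
Qed.

Lemma scalar_nat k : scalar k%:R.
Proof. by exists k%:R; rewrite !rmorph_nat. Qed.

Lemma scalarX x k : scalar x -> scalar (x ^+ k).
Proof. by move=> [c ->]; exists (c ^+ k); rewrite !rmorphXn. Qed.

Lemma scalarXz x (z : int) : scalar x -> scalar (x ^ z).
Proof. by case: z => k Sx /=; [apply: scalarX | apply/scalarV/scalarX]. Qed.

Lemma scalar_prod (I : Type) (s : seq I) (P : pred I) (G : I -> F) :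
  (forall i, P i -> scalar (G i)) -> scalar (\prod_(i <- s | P i) G i).
Proof. by move=> SG; apply: big_ind => //; [exact: scalar1 | exact: scalarM]. Qed.

Lemma scalar_vv : scalar (vv n). Proof. by exists vQ. Qed.

Lemma scalar_vvX k : scalar (vv n ^+ k). Proof. exact/scalarX/scalar_vv. Qed.

Lemma vv_neq0 : vv n != 0.
Proof. by rewrite !(tofrac_eq0, mpolyC_eq0) polyX_eq0. Qed.

Lemma vvX_inj : injective (GRing.exp (vv n)).
Proof.
have vvXE k : vv n ^+ k = ((('X^k : {poly rat})%:F)%:MP)%:F by rewrite !rmorphXn.
move=> a b /=; rewrite !vvXE => /eqP; rewrite tofrac_eq => /eqP/(can_inj (@mpolyCK _ _)).
move/eqP; rewrite tofrac_eq => /eqP/(congr1 (fun p : {poly rat} => size p)).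
by rewrite !size_polyXn => -[].
Qed.

Lemma KK_neq0 i : KK i != 0 :> F.
Proof.
rewrite tofrac_eq0; apply/eqP => /(congr1 (meval (fun _ => 1 : Qv))).
by rewrite meval0 mevalXU => /eqP; rewrite oner_eq0.
Qed.

Local Notation Kprod := (\prod_(i < n) KK i).

Lemma Kprod_neq0 : Kprod != 0.
Proof. by apply/prodf_neq0 => i _; apply: KK_neq0. Qed.

Lemma inU0_tofrac p : U0 p%:F.
Proof. by exists p, 0%N; rewrite expr0 divr1. Qed.

Lemma inU0_scalar x : scalar x -> U0 x.
Proof. by move=> [c ->]; apply: inU0_tofrac. Qed.

Lemma inU0D x y : U0 x -> U0 y -> U0 (x + y).
Proof.
move=> [p [m ->]] [q [k ->]]; pose D : {mpoly Qv[n]} := \prod_(i < n) 'X_i.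
have DE : D%:F = Kprod by rewrite rmorph_prod.
exists (p * D ^+ k + q * D ^+ m), (m + k)%N.
by rewrite addf_div ?expf_neq0 ?Kprod_neq0 // -DE -!rmorphXn -!rmorphM -rmorphD exprD.
Qed.

Lemma inU0N x : U0 x -> U0 (- x).
Proof. by move=> [p [m ->]]; exists (- p), m; rewrite rmorphN mulNr. Qed.

Lemma inU0B x y : U0 x -> U0 y -> U0 (x - y).
Proof. by move=> Ux Uy; apply/inU0D/inU0N. Qed.

Lemma inU0M x y : U0 x -> U0 y -> U0 (x * y).
Proof.
move=> [p [m ->]] [q [k ->]]; exists (p * q), (m + k)%N.
by rewrite rmorphM mulf_div exprD.
Qed.

Lemma inU0_prod (I : Type) (s : seq I) (P : pred I) (G : I -> F) :
  (forall i, P i -> U0 (G i)) -> U0 (\prod_(i <- s | P i) G i).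
Proof.
by move=> UG; apply: big_ind => //; [apply/inU0_scalar/scalar1 | exact: inU0M].
Qed.

Lemma inU0_KK i : U0 (KK i). Proof. exact: inU0_tofrac. Qed.

Lemma inU0_KKV i : U0 (KK i)^-1.
Proof.
exists (\prod_(j < n | j != i) 'X_j), 1%N.
rewrite expr1 rmorph_prod [X in _ / X](bigD1 i) //= invfM mulrCA mulfV ?mulr1 //.
by apply/prodf_neq0 => j _; apply: KK_neq0.
Qed.

End LaurentRing.

Lemma invf_residue (K : fieldType) (X a E : K) : X != 0 -> a != 0 ->
  X^-1 * E - a^-1 * E = - (X^-1 * a^-1) * (X * E - a * E).
Proof.
move=> X0 a0; rewrite [RHS]mulNr mulrBr opprB !mulrA -(mulrA X^-1) mulVf // mulr1.
by rewrite (mulrAC X^-1 a^-1 X) mulVf // mul1r.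
Qed.

Section IdealGen.
Variables (n : nat) (S : FF n -> Prop).
Local Notation F := (FF n).
Local Notation U0 := (@inU0 n).
Local Notation ideal := (ideal_gen S).

Lemma ideal_gen0 : ideal 0.
Proof. by exists 0%N, (fun _ => 0), (fun _ => 0); split=> [[]|]; rewrite ?big_ord0. Qed.

Lemma ideal_gen_mem g : S g -> ideal g.
Proof.
move=> Sg; exists 1%N, (fun _ => 1), (fun _ => g); rewrite big_ord1 mul1r.
by split=> // _; split=> //; apply/inU0_scalar/scalar1.
Qed.

Lemma ideal_genD x y : ideal x -> ideal y -> ideal (x + y).
Proof.
move=> [k1 [a1 [g1 [H1 ->]]]] [k2 [a2 [g2 [H2 ->]]]].
pose glue (T : Type) (f1 : 'I_k1 -> T) (f2 : 'I_k2 -> T) (j : 'I_(k1 + k2)) :=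
  match split j with inl j1 => f1 j1 | inr j2 => f2 j2 end.
exists (k1 + k2)%N, (glue _ a1 a2), (glue _ g1 g2); split.
  by move=> j; rewrite /glue; case: (split j).
rewrite big_split_ord /glue; congr (_ + _); apply: eq_bigr => j _.
  by rewrite (unsplitK (inl j) : split (lshift k2 j) = inl j).
by rewrite (unsplitK (inr j) : split (rshift k1 j) = inr j).
Qed.

Lemma ideal_genMl c x : U0 c -> ideal x -> ideal (c * x).
Proof.
move=> Uc [k [a [g [H ->]]]]; exists k, (fun j => c * a j), g; split.
  by move=> j; have [Uaj Sgj] := H j; split=> //; apply: inU0M.
by rewrite mulr_sumr; apply: eq_bigr => j _; rewrite mulrA.
Qed.

Lemma ideal_genN x : ideal x -> ideal (- x).
Proof.
by rewrite -mulN1r; apply: ideal_genMl; apply/inU0N/inU0_scalar/scalar1.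
Qed.

Lemma ideal_genB x y : ideal x -> ideal y -> ideal (x - y).
Proof. by move=> Ix Iy; apply/ideal_genD/ideal_genN. Qed.

Lemma ideal_gen_sum (I : Type) (s : seq I) (P : pred I) (G : I -> F) :
  (forall i, P i -> ideal (G i)) -> ideal (\sum_(i <- s | P i) G i).
Proof. by move=> IG; apply: big_ind => //; [apply: ideal_gen0 | apply: ideal_genD]. Qed.

Lemma ideal_gen_sub (T : F -> Prop) x :
  (forall g, T g -> ideal g) -> ideal_gen T x -> ideal x.
Proof.
move=> TI [k [a [g [H ->]]]]; apply: ideal_gen_sum => j _.
by have [Uaj Tgj] := H j; apply/ideal_genMl/TI.
Qed.

Definition eigen_mod (E X a : F) : Prop :=
  [/\ U0 X, U0 a & ideal (X * E - a * E)].

Lemma eigen_mod_scalar E c : scalar c -> eigen_mod E c c.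
Proof. by move=> Sc; split; rewrite ?subrr; [exact: inU0_scalar..| exact: ideal_gen0]. Qed.

Lemma eigen_modB E X Y a b :
  eigen_mod E X a -> eigen_mod E Y b -> eigen_mod E (X - Y) (a - b).
Proof.
move=> [UX Ua IX] [UY Ub IY]; split; [exact: inU0B UX UY | exact: inU0B Ua Ub |].
have -> : (X - Y) * E - (a - b) * E = (X * E - a * E) - (Y * E - b * E) by ring.
exact: ideal_genB.
Qed.

Lemma eigen_modM E X Y a b :
  eigen_mod E X a -> eigen_mod E Y b -> eigen_mod E (X * Y) (a * b).
Proof.
move=> [UX Ua IX] [UY Ub IY]; split; [exact: inU0M UX UY | exact: inU0M Ua Ub |].
have -> : X * Y * E - a * b * E = X * (Y * E - b * E) + b * (X * E - a * E) by ring.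
exact: ideal_genD (ideal_genMl UX IY) (ideal_genMl Ub IX).
Qed.

Lemma eigen_mod_prod E (I : Type) (s : seq I) (P : pred I) (X a : I -> F) :
  (forall i, P i -> eigen_mod E (X i) (a i)) ->
  eigen_mod E (\prod_(i <- s | P i) X i) (\prod_(i <- s | P i) a i).
Proof.
move=> XE; apply: (big_ind2 (fun Y b => eigen_mod E Y b)) => //.
  exact/eigen_mod_scalar/scalar1.
by move=> Y1 b1 Y2 b2; apply: eigen_modM.
Qed.

Lemma eigen_modV E X a : U0 X^-1 -> scalar a -> X != 0 -> a != 0 ->
  eigen_mod E X a -> eigen_mod E X^-1 a^-1.
Proof.
move=> UXV Sa X0 a0 [_ _ IX]; split=> //; first exact/inU0_scalar/scalarV.
have Uc : U0 (- (X^-1 * a^-1)) by apply/inU0N/inU0M/inU0_scalar/scalarV.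
by rewrite (invf_residue E X0 a0); exact: ideal_genMl Uc IX.
Qed.

Lemma eigen_mod_qbin E X x a t : U0 X^-1 -> scalar x -> X != 0 -> x != 0 ->
  eigen_mod E X x -> eigen_mod E (qbin X a t) (qbin x a t).
Proof.
move=> UXV Sx X0 x0 XE; have XVE := eigen_modV UXV Sx X0 x0 XE.
have Sv z : scalar (vv n ^ z) by apply/scalarXz/scalar_vv.
rewrite /qbin; apply: eigen_mod_prod => s _.
apply: eigen_modM; last first.
  by apply/eigen_mod_scalar/scalarV/scalarB.
by apply: eigen_modB; apply: eigen_modM => //; apply: eigen_mod_scalar.
Qed.

End IdealGen.

Section QBinomialAtPowers.
Variable n : nat.
Local Notation v := (vv n).

Let qdiff (z : int) : FF n := v ^ z - v ^ (- z).

Let qdiff_neq0 (s : nat) : (0 < s)%N -> qdiff s != 0.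
Proof.
move=> s_gt0; rewrite /qdiff -exprnP -exprnN subr_eq0; apply/eqP => vsE.
have vs0 : v ^+ s != 0 := expf_neq0 s (vv_neq0 n).
have : v ^+ (s + s) = v ^+ 0 by rewrite exprD {2}vsE mulfV // expr0.
by move/vvX_inj; case: s s_gt0 {vsE vs0}.
Qed.

Lemma qbin_vvX (m t : nat) :
  qbin (v ^+ m) 0 t = \prod_(1 <= s < t.+1) (qdiff (m%:Z - s%:Z + 1) / qdiff s).
Proof.
apply: eq_bigr => s _; rewrite /qdiff exprnP exprnN -!expfzDr ?vv_neq0 //.
by congr ((v ^ _ - v ^ _) / _); lia.
Qed.

Lemma qbin_vvX_lt (m t : nat) : (m < t)%N -> qbin (v ^+ m) 0 t = 0.
Proof.
move=> lt_mt; rewrite qbin_vvX; apply/eqP; rewrite prodf_seq_eq0; apply/hasP.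
exists m.+1; first by rewrite mem_index_iota.
have -> : m%:Z - m.+1%:Z + 1 = 0 by lia.
by rewrite (subrr (v ^ 0) : qdiff 0 = 0) mul0r eqxx.
Qed.

Lemma qbin_vvX_diag (m : nat) : qbin (v ^+ m) 0 m = 1.
Proof.
rewrite qbin_vvX big_split /= prodfV big_nat_rev /=.
rewrite (eq_big_nat _ _ (F2 := qdiff)) => [|s /andP[s_gt0 s_le]]; last first.
  by congr qdiff; lia.
apply: mulfV; rewrite prodf_seq_neq0; apply/allP => s.
by rewrite mem_index_iota => /andP[s_gt0 _]; apply: qdiff_neq0.
Qed.

End QBinomialAtPowers.

Section Idempotents.
Variables n r : nat.
Local Notation F := (FF n).
Local Notation v := (vv n).
Local Notation U0 := (@inU0 n).

Definition lagrange_idem (a : 'I_r.+1) (y : F) : F :=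
  (tnth (@lagrange F r.+1 (GRing.exp v)) a).[y].

Lemma lagrange_idemE a y :
  lagrange_idem a y = (\prod_(s < r.+1 | s != a) (v ^+ a - v ^+ s))^-1 *
                      \prod_(s < r.+1 | s != a) (y - v ^+ s).
Proof.
rewrite /lagrange_idem (lagrangeE (ltn0Sn r) (@vvX_inj n)) /=.
rewrite hornerM hornerC !horner_prod.
have hornerE z : \prod_(s < r.+1 | s != a) ('X - (v ^+ s)%:P).[z] =
                 \prod_(s < r.+1 | s != a) (z - v ^+ s).
  by apply: eq_bigr => s _; exact: hornerXsubC.
by rewrite !hornerE.
Qed.

Lemma sum_lagrange_idem y : \sum_(a < r.+1) lagrange_idem a y = 1.
Proof.
have := @lagrange_gen F r.+1 _ (ltn0Sn r) (@vvX_inj n) 1.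
rewrite size_poly1 => /(_ isT).
move=> /(congr1 (horner^~ y)); rewrite hornerC horner_sum => ->.
by apply: eq_bigr => a _; rewrite hornerM !hornerC mul1r.
Qed.

Lemma lagrange_idem_factor (a : 'I_r.+1) y :
  (y - v ^+ a) * lagrange_idem a y =
  (\prod_(s < r.+1 | s != a) (v ^+ a - v ^+ s))^-1 * \prod_(s < r.+1) (y - v ^+ s).
Proof. by rewrite lagrange_idemE [X in _ = _ * X](bigD1 a) //= mulrCA. Qed.

Lemma inU0_lagrange_idem a i : U0 (lagrange_idem a (KK i)).
Proof.
rewrite lagrange_idemE; apply: inU0M.
  by apply/inU0_scalar/scalarV/scalar_prod => s _; apply/scalarB; apply: scalar_vvX.
by apply: inU0_prod => s _; apply/inU0B/inU0_scalar/scalar_vvX; apply: inU0_KK.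
Qed.

Definition comp_idem (mu : Defs.comp n r) : F :=
  \prod_(i < n) lagrange_idem (mu i) (KK i).

Lemma inU0_comp_idem mu : U0 (comp_idem mu).
Proof. by apply: inU0_prod => i _; apply: inU0_lagrange_idem. Qed.

Lemma sum_comp_idem : \sum_(mu : Defs.comp n r) comp_idem mu = 1.
Proof.
rewrite -(bigA_distr_bigA (fun i (a : 'I_r.+1) => lagrange_idem a (KK i))).
by apply: big1 => i _; apply: sum_lagrange_idem.
Qed.

End Idempotents.

Section IsetInIdealJ.
Variables n r : nat.
Local Notation F := (FF n).
Local Notation v := (vv n).
Local Notation J := (@Jset n r).

Lemma comp_idem_eigen_KK (mu : Defs.comp n r) i :
  eigen_mod J (comp_idem mu) (KK i) (v ^+ mu i).
Proof.
split; [exact: inU0_KK | exact/inU0_scalar/scalar_vvX |].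
rewrite -mulrBl /comp_idem (bigD1 i) //= mulrA lagrange_idem_factor -/(Kfact i r).
rewrite mulrAC; apply: ideal_genMl; last by apply: ideal_gen_mem; right; exists i.
apply: inU0M.
  by apply/inU0_scalar/scalarV/scalar_prod => s _; apply/scalarB; apply: scalar_vvX.
by apply: inU0_prod => j _; apply: inU0_lagrange_idem.
Qed.

Lemma comp_idem_notcomp (mu : Defs.comp n r) :
  ~~ is_comp mu -> ideal_gen J (comp_idem mu).
Proof.
move=> mu_notcomp; set m := (\sum_(i < n) mu i)%N.
have [_ _ IK] : eigen_mod J (comp_idem mu) (\prod_(i < n) KK i) (v ^+ m).
  by rewrite -prodrXr; apply: eigen_mod_prod => i _; apply: comp_idem_eigen_KK.
have IJ : ideal_gen J (comp_idem mu * (\prod_(i < n) KK i - v ^+ r)).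
  by apply: ideal_genMl (inU0_comp_idem mu) _; apply: ideal_gen_mem; left.
have d_neq0 : v ^+ m - v ^+ r != 0.
  by rewrite subr_eq0; apply: contra mu_notcomp => /eqP/vvX_inj eq_mr; apply/eqP.
rewrite -[comp_idem mu](mulKf d_neq0); apply: ideal_genMl.
  by apply/inU0_scalar/scalarV/scalarB; apply: scalar_vvX.
have -> : (v ^+ m - v ^+ r) * comp_idem mu =
    comp_idem mu * (\prod_(i < n) KK i - v ^+ r)
    - (\prod_(i < n) KK i * comp_idem mu - v ^+ m * comp_idem mu) by ring.
exact: ideal_genB.
Qed.

Lemma comp_eq_of_le (lam mu : Defs.comp n r) : is_comp lam -> is_comp mu ->
  (forall i, lam i <= mu i)%N -> lam = mu.
Proof.
move=> /eqP lam_r /eqP mu_r le_lam_mu.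
have [_] := leqif_sum (P := xpredT) (fun i _ => leqif_eq (le_lam_mu i)).
rewrite lam_r mu_r eqxx => /esym/forallP eq_lam_mu.
by apply/ffunP => i; apply/val_inj/eqP; apply: (implyP (eq_lam_mu i)).
Qed.

Lemma prod_qbin_comp (lam mu : Defs.comp n r) : is_comp lam -> is_comp mu ->
  \prod_(i < n) qbin (v ^+ mu i) 0 (lam i) = (lam == mu)%:R.
Proof.
move=> lam_comp mu_comp; have [<-|neq_lam_mu] := eqVneq lam mu.
  by apply: big1 => i _; apply: qbin_vvX_diag.
have [i lt_mu_lam] : exists i, (mu i < lam i)%N.
  apply/existsP; apply: contraR neq_lam_mu => /existsPn le_lam_mu.
  by apply/eqP/comp_eq_of_le => // i; rewrite leqNgt le_lam_mu.
by rewrite (bigD1 i) //= qbin_vvX_lt // mul0r.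
Qed.

Lemma frakL_eigen_comp_idem (lam mu : Defs.comp n r) :
  eigen_mod J (comp_idem mu) (frakL lam) (\prod_(i < n) qbin (v ^+ mu i) 0 (lam i)).
Proof.
apply: eigen_mod_prod => i _; apply: eigen_mod_qbin (comp_idem_eigen_KK mu i).
- exact: inU0_KKV.
- exact: scalar_vvX.
- exact: KK_neq0.
- exact/expf_neq0/vv_neq0.
Qed.

Lemma frakL_comp_idem (lam : Defs.comp n r) :
  is_comp lam -> ideal_gen J (frakL lam - comp_idem lam).
Proof.
move=> lam_comp.
have -> : frakL lam - comp_idem lam =
    \sum_(mu : Defs.comp n r) (frakL lam * comp_idem mu - (lam == mu)%:R * comp_idem mu).
  rewrite sumrB -mulr_sumr sum_comp_idem mulr1 (bigD1 lam) //= eqxx mul1r big1 ?addr0 //.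
  by move=> mu; rewrite eq_sym => /negbTE->; rewrite mul0r.
apply: ideal_gen_sum => mu _; have [mu_comp|mu_notcomp] := boolP (is_comp mu).
  by have [_ _] := frakL_eigen_comp_idem lam mu; rewrite prod_qbin_comp.
rewrite -mulrBl; apply: ideal_genMl (comp_idem_notcomp mu_notcomp).
have [UL _ _] := frakL_eigen_comp_idem lam mu.
exact/inU0B/inU0_scalar/scalar_nat.
Qed.

Lemma Iset_in_ideal_J x : Iset r x -> ideal_gen J x.
Proof.
have UL (lam : Defs.comp n r) : inU0 (frakL lam).
  by have [] := frakL_eigen_comp_idem lam lam.
case=> [->|[[lam [mu [lam_comp mu_comp ->]]]|[i [lam [lam_comp ->]]]]].
- rewrite -(sum_comp_idem n r) (bigID (@is_comp n r)) /=.
  set A := \sum_(mu | is_comp mu) _; set B := \sum_(mu | ~~ is_comp mu) _.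
  set L := \sum_(lam | is_comp lam) _.
  have -> : A + B - L = B - (L - A) by ring.
  apply: ideal_genB; first by apply: ideal_gen_sum => mu; apply: comp_idem_notcomp.
  by rewrite /L /A -sumrB; apply: ideal_gen_sum => lam; apply: frakL_comp_idem.
- have [_ _ ILE] := frakL_eigen_comp_idem lam mu.
  rewrite prod_qbin_comp // in ILE.
  have FE := frakL_comp_idem mu_comp.
  have -> : frakL lam * frakL mu - (lam == mu)%:R * frakL lam =
    frakL lam * (frakL mu - comp_idem mu) + (frakL lam * comp_idem mu -
      (lam == mu)%:R * comp_idem mu) - (lam == mu)%:R * (frakL mu - comp_idem mu).
    by case: eqP => [<-|_] /=; ring.
  exact: ideal_genB (ideal_genD (ideal_genMl (UL lam) FE) ILE)
                    (ideal_genMl (inU0_scalar (scalar_nat _ _)) FE).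
- have [_ _ IKE] := comp_idem_eigen_KK lam i.
  have FE := frakL_comp_idem lam_comp.
  have -> : KK i * frakL lam - v ^+ lam i * frakL lam =
    KK i * (frakL lam - comp_idem lam) + (KK i * comp_idem lam -
      v ^+ lam i * comp_idem lam) - v ^+ lam i * (frakL lam - comp_idem lam) by ring.
  exact: ideal_genB (ideal_genD (ideal_genMl (inU0_KK i) FE) IKE)
                    (ideal_genMl (inU0_scalar (scalar_vvX _ _)) FE).
Qed.

End IsetInIdealJ.

Section JsetInIdealI.
Variables n r : nat.
Local Notation F := (FF n).
Local Notation v := (vv n).
Local Notation I := (@Iset n r).

Lemma frakL_eigen_KK (lam : Defs.comp n r) i :
  is_comp lam -> eigen_mod I (frakL lam) (KK i) (v ^+ lam i).
Proof.
move=> lam_comp; split; [exact: inU0_KK | exact/inU0_scalar/scalar_vvX |].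
by apply: ideal_gen_mem; right; right; exists i, lam.
Qed.

Lemma ideal_I_of_eigen0 (X : F) : inU0 X ->
  (forall lam : Defs.comp n r, is_comp lam -> eigen_mod I (frakL lam) X 0) ->
  ideal_gen I X.
Proof.
move=> UX XL0; set L := \sum_(lam : Defs.comp n r | is_comp lam) frakL lam.
have -> : X = X * (1 - L) + X * L by ring.
apply: ideal_genD; first by apply/ideal_genMl/ideal_gen_mem => //; left.
rewrite mulr_sumr; apply: ideal_gen_sum => lam lam_comp.
by have [_ _] := XL0 lam lam_comp; rewrite mul0r subr0.
Qed.

Lemma Jset_in_ideal_I x : Jset r x -> ideal_gen I x.
Proof.
have UvX k : inU0 (v ^+ k) by apply/inU0_scalar/scalar_vvX.
case=> [->|[i ->]]; apply: ideal_I_of_eigen0 => [|lam lam_comp].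
- by apply: inU0B (UvX r); apply: inU0_prod => i _; apply: inU0_KK.
- suff: eigen_mod I (frakL lam) (\prod_(i < n) KK i - v ^+ r)
                      (\prod_(i < n) v ^+ lam i - v ^+ r).
    by rewrite prodrXr (eqP lam_comp) (subrr (v ^+ r)).
  apply: eigen_modB; last exact/eigen_mod_scalar/scalar_vvX.
  by apply: eigen_mod_prod => i _; apply: frakL_eigen_KK.
- by apply: inU0_prod => s _; apply: inU0B (UvX s); apply: inU0_KK.
- suff: eigen_mod I (frakL lam) (Kfact i r) (\prod_(s < r.+1) (v ^+ lam i - v ^+ s)).
    by rewrite (bigD1 (lam i)) //= (subrr (v ^+ lam i)) mul0r.
  apply: eigen_mod_prod => s _; apply: eigen_modB; first exact: frakL_eigen_KK.
  exact/eigen_mod_scalar/scalar_vvX.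
Qed.

End JsetInIdealI.

Theorem lemma5p1p2 (n r : nat) :
  (1 <= n)%N -> (1 <= r)%N ->
  forall x : FF n, ideal_gen (@Iset n r) x <-> ideal_gen (@Jset n r) x.
Proof.
move=> _ _ x; split; apply: ideal_gen_sub.
- exact: Iset_in_ideal_J.
- exact: Jset_in_ideal_I.
Qed.
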